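(* Let $F=\{f_i\}_{i=1}^N$ be a frame for $\mathcal H$. If $(F,S_F^{-1}F)\in\mathcal N^{(1)}$, then $\{S_F^{-1/2}f_i\}_{i=1}^N$ is an equal norm Parseval frame. In addition, if $G$ is any dual of $F$ with $(F,G)\in\mathcal N^{(1)}$, then $G=S_F^{-1}F$.
   Context: $\mathcal H$ is a complex Hilbert space of finite dimension $n$, inner product linear in the first argument, $N\ge n$. A finite sequence $F=\{f_i\}_{i=1}^N$ is a frame if there are $0<A\le B$ with $A\|f\|^2\le\sum_i|\langle f,f_i\rangle|^2\le B\|f\|^2$ for all $f$; Parseval if $\sum_i|\langle f,f_i\rangle|^2=\|f\|^2$ for all $f$; equal norm if $\|f_i\|$ is constant. $S_Ff=\sum_i\langle f,f_i\rangle f_i$ is the (positive invertible) frame operator, $S_F^{-1/2}$ its inverse positive square root, $S_F^{-1}F=\{S_F^{-1}f_i\}$ the canonical dual. $G=\{g_i\}_{i=1}^N$ is a dual of $F$ if $f=\sum_i\langle f,g_i\rangle f_i$ for all $f$; $(F,G)$ is then an $(N,n)$ dual pair. $E_{\Lambda,F,G}f=\sum_{i\in\Lambda}\langle f,f_i\rangle g_i$. The numerical radius is $\omega(T)=\sup\{|\langle Tf,f\rangle|:\|f\|=1\}$; $\eta^{(1)}_{F,G}=\max_{1\le i\le N}\omega(E_{\{i\},F,G})$; $\eta^{(1)}=\inf\{\eta^{(1)}_{F,G}:(F,G)\text{ an }(N,n)\text{ dual pair}\}$; $\mathcal N^{(1)}=\{(F,G):\eta^{(1)}_{F,G}=\eta^{(1)}\}$.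 *)

(* complex Hilbert space H = C^n with C := R[i], R : realType. *)
From HB Require Import structures.
From mathcomp Require Import all_boot all_order all_algebra.
From mathcomp Require Import complex.
From mathcomp Require Import boolp classical_sets reals.
Set Implicit Arguments. Unset Strict Implicit. Unset Printing Implicit Defensive.
Import Order.TTheory GRing.Theory Num.Theory.
Local Open Scope ring_scope.

Section FrameDefs.
Variable R : realType.
Local Notation C := (R[i]).

(* inner product on C^n, linear in the first argument *)
Definition ip (n : nat) (x y : 'cV[C]_n) : C :=
  \sum_(k < n) x k 0 * conjc (y k 0).

Definition vnorm (n : nat) (x : 'cV[C]_n) : R := Num.sqrt (complex.Re (ip x x)).

(* modulus |z| of a complex number, as a real number (real part of the
   library's norm `|z| : C, which is real) *)
Definition cabs (z : C) : R := complex.Re `|z|.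

Definition absip (n : nat) (x y : 'cV[C]_n) : R := cabs (ip x y).

Definition is_frame (n N : nat) (F : 'I_N -> 'cV[C]_n) : Prop :=
  exists A B : R, 0 < A /\ A <= B /\
    forall f : 'cV[C]_n,
      A * vnorm f ^+ 2 <= \sum_(i < N) absip f (F i) ^+ 2 /\
      \sum_(i < N) absip f (F i) ^+ 2 <= B * vnorm f ^+ 2.

Definition is_parseval (n N : nat) (F : 'I_N -> 'cV[C]_n) : Prop :=
  forall f : 'cV[C]_n, \sum_(i < N) absip f (F i) ^+ 2 = vnorm f ^+ 2.

Definition equal_norm (n N : nat) (F : 'I_N -> 'cV[C]_n) : Prop :=
  forall i j : 'I_N, vnorm (F i) = vnorm (F j).

(* rank-one operator  f |-> <f,u> v  as a matrix: v u^*  *)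
Definition rank1 (n : nat) (u v : 'cV[C]_n) : 'M[C]_n :=
  \matrix_(k < n, l < n) (v k 0 * conjc (u l 0)).

Definition frame_op (n N : nat) (F : 'I_N -> 'cV[C]_n) : 'M[C]_n :=
  \sum_(i < N) rank1 (F i) (F i).

Definition canon_dual (n N : nat) (F : 'I_N -> 'cV[C]_n) : 'I_N -> 'cV[C]_n :=
  fun i => invmx (frame_op F) *m F i.

Definition is_dual (n N : nat) (F G : 'I_N -> 'cV[C]_n) : Prop :=
  forall f : 'cV[C]_n, f = \sum_(i < N) ip f (G i) *: F i.

Definition dual_pair (n N : nat) (F G : 'I_N -> 'cV[C]_n) : Prop :=
  is_frame F /\ is_dual F G.

(* positive operator: <Pf,f> >= 0 for all f (order of C: real and nonneg) *)
Definition pos_op (n : nat) (P : 'M[C]_n) : Prop :=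
  forall f : 'cV[C]_n, 0 <= ip (P *m f) f.

Definition numrad (n : nat) (T : 'M[C]_n) : R :=
  sup [set cabs (ip (T *m f) f) | f in [set f : 'cV[C]_n | vnorm f = 1]].

Definition E1 (n N : nat) (F G : 'I_N -> 'cV[C]_n) (i : 'I_N) : 'M[C]_n :=
  rank1 (F i) (G i).

Definition eta1FG (n N : nat) (F G : 'I_N -> 'cV[C]_n) : R :=
  \big[Num.max/0]_(i < N) numrad (E1 F G i).

Definition eta1 (n N : nat) : R :=
  inf [set eta1FG FG.1 FG.2 |
       FG in [set FG : ('I_N -> 'cV[C]_n) * ('I_N -> 'cV[C]_n) | dual_pair FG.1 FG.2]].

Definition inN1 (n N : nat) (F G : 'I_N -> 'cV[C]_n) : Prop :=
  dual_pair F G /\ eta1FG F G = eta1 n N.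

End FrameDefs.

From HB Require Import structures.
From mathcomp Require Import all_boot all_order all_algebra.
From mathcomp Require Import cyclic separable cyclotomic.
From mathcomp Require Import complex.
From mathcomp Require Import boolp classical_sets reals.
From mathcomp Require Import ring lra.
Set Implicit Arguments. Unset Strict Implicit. Unset Printing Implicit Defensive.
Import Order.TTheory GRing.Theory Num.Theory.
Local Open Scope classical_set_scope.
Local Open Scope complex_scope.
Local Open Scope ring_scope.

(* For every dual pair (F, G) the numbers <g_i, f_i> add up to the trace of
   sum_i f_i g_i^* = I, that is to n, and |<g_i, f_i>| <= omega(E_{i}) <= eta_{F,G};
   a harmonic frame (n rows of the N x N Fourier matrix) shows eta^(1) <= n/N.
   Hence a pair in N^(1) has <g_i, f_i> = n/N for all i.  Evaluating E_{i} on
   |g_i| f_i + |f_i| g_i gives omega(E_{i}) >= (|f_i| |g_i| + n/N) / 2, so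
   |f_i| |g_i| <= <g_i, f_i>, and equality in Cauchy-Schwarz forces
   g_i = (n/N) |f_i|^-2 f_i, which depends on F alone.  For G = S^-1 F this reads
   |S^-1/2 f_i|^2 = <S^-1 f_i, f_i> = n/N, and S^-1/2 F is Parseval because
   S^-1/2 S S^-1/2 = I. *)

Lemma closed_prim_root_exists (K : closedFieldType) (N : nat) :
  N%:R != 0 :> K -> exists z : K, N.-primitive_root z.
Proof.
move=> N_neq0; have N_gt0 : (0 < N)%N by rewrite lt0n; apply: contraNneq N_neq0 => ->.
pose p : {poly K} := 'X^N - 1; have [r Dp] := closed_field_poly_normal p.
rewrite (monicP _) ?monicXnsubC // scale1r in Dp.
have r_unity : all N.-unity_root r by apply/allP=> z; rewrite -root_prod_XsubC -Dp.
have r_size : (N < (size r).+1)%N.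
  by rewrite -(size_prod_XsubC r id) -Dp size_XnsubC.
have [|z] := hasP (has_prim_root N_gt0 r_unity _ r_size); last by exists z.
by rewrite -separable_prod_XsubC -Dp separable_Xn_sub_1.
Qed.

Section ComplexHilbert.
Variable R : realType.
Local Notation C := R[i].

Lemma normc_cabs (z : C) : `|z| = (cabs z)%:C.
Proof. by rewrite /cabs normc_def. Qed.

Lemma cabs_ge0 (z : C) : 0 <= cabs z.
Proof. by rewrite /cabs normc_def sqrtr_ge0. Qed.

Lemma cabsM (z w : C) : cabs (z * w) = cabs z * cabs w.
Proof. by apply: complexI; rewrite -normc_cabs normrM !normc_cabs -rmorphM. Qed.

Lemma cabsR (a : R) : cabs a%:C = `|a|.
Proof. by rewrite /cabs normc_def /= expr0n addr0 sqrtr_sqr. Qed.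

Lemma mulcJ_cabs (z : C) : z * conjc z = (cabs z ^+ 2)%:C.
Proof. by rewrite -sqr_normc normc_cabs rmorphXn. Qed.

Lemma Re_le_cabs (z : C) : complex.Re z <= cabs z.
Proof.
by rewrite -(lecR (complex.Re z)) -normc_cabs (le_trans _ (normc_ge_Re z)) // lecR ler_norm.
Qed.

Lemma cabs_le_Re (z : C) : cabs z <= complex.Re z -> z = (complex.Re z)%:C.
Proof.
rewrite /cabs normc_def; case: z => a b /= le_ab.
have a_ge0 : 0 <= a by apply: le_trans le_ab; apply: sqrtr_ge0.
move: le_ab; rewrite -{2}(ger0_norm a_ge0) -sqrtr_sqr ler_sqrt ?sqr_ge0 //.
rewrite -{2}[a ^+ 2]addr0 lerD2l => b_le0.
have : b ^+ 2 == 0 by rewrite eq_le b_le0 sqr_ge0.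
by rewrite sqrf_eq0 => /eqP ->.
Qed.

Lemma Re_sum I (r : seq I) (P : pred I) (f : I -> C) :
  complex.Re (\sum_(i <- r | P i) f i) = \sum_(i <- r | P i) complex.Re (f i).
Proof. exact: (raddf_sum (@complex.Re R : {additive Rcomplex R -> R})). Qed.

Lemma ger0_complex (z : C) : 0 <= z -> z = (complex.Re z)%:C.
Proof. by move=> z_ge0; rewrite RRe_real ?ger0_real. Qed.

Lemma conjcM (a b : C) : conjc (a * b) = conjc a * conjc b.
Proof. exact: rmorphM. Qed.

Lemma conjcX (a : C) m : conjc (a ^+ m) = conjc a ^+ m.
Proof. exact: rmorphXn. Qed.

Lemma unity_root_mulcJ (z : C) N : (0 < N)%N -> z ^+ N = 1 -> z * conjc z = 1.
Proof.
move=> N_gt0 zN; have z_norm1 : `|z| = 1.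
  by apply/eqP; rewrite -(pexpr_eq1 N_gt0) // -normrX zN normr1.
by rewrite -sqr_normc z_norm1 expr1n.
Qed.

Definition adjoint m n (A : 'M[C]_(m, n)) : 'M[C]_(n, m) := map_mx conjc A^T.

Lemma adjointK m n (A : 'M[C]_(m, n)) : adjoint (adjoint A) = A.
Proof. by apply/matrixP => i j; rewrite !mxE conjcK. Qed.

Lemma adjointM m n p (A : 'M[C]_(m, n)) (B : 'M[C]_(n, p)) :
  adjoint (A *m B) = adjoint B *m adjoint A.
Proof. by rewrite /adjoint trmx_mul (map_mxM (conjc : {rmorphism C -> C})). Qed.

Section InnerProduct.
Variable n : nat.
Implicit Types (f g u v x y z : 'cV[C]_n) (A : 'M[C]_n).

Lemma ipE x y : ip x y = (adjoint y *m x) 0 0.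
Proof. by rewrite /ip mxE; apply: eq_bigr => k _; rewrite !mxE mulrC. Qed.

Lemma ip_adjointl A x y : ip (A *m x) y = ip x (adjoint A *m y).
Proof. by rewrite !ipE adjointM adjointK mulmxA. Qed.

Lemma ipC x y : ip y x = conjc (ip x y).
Proof.
by rewrite /ip rmorph_sum; apply: eq_bigr => k _; rewrite rmorphM /= conjcK mulrC.
Qed.

Lemma ipDl x y z : ip (x + y) z = ip x z + ip y z.
Proof. by rewrite /ip -big_split; apply: eq_bigr => k _; rewrite !mxE mulrDl. Qed.

Lemma ipZl a x z : ip (a *: x) z = a * ip x z.
Proof. by rewrite /ip mulr_sumr; apply: eq_bigr => k _; rewrite !mxE mulrA. Qed.

Lemma ipNl x z : ip (- x) z = - ip x z.
Proof. by rewrite -scaleN1r ipZl mulN1r. Qed.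

Lemma ip0l z : ip 0 z = 0.
Proof. by rewrite -(scale0r 0) ipZl mul0r. Qed.

Lemma ip_suml I (r : seq I) (P : pred I) (f : I -> 'cV[C]_n) z :
  ip (\sum_(i <- r | P i) f i) z = \sum_(i <- r | P i) ip (f i) z.
Proof. exact: (big_morph (fun x => ip x z) (fun x y => ipDl x y z) (ip0l z)). Qed.

Lemma ipDr x y z : ip z (x + y) = ip z x + ip z y.
Proof. by rewrite ipC ipDl rmorphD /= -!ipC. Qed.

Lemma ipZr a x z : ip z (a *: x) = conjc a * ip z x.
Proof. by rewrite ipC ipZl rmorphM /= -ipC. Qed.

Lemma ipNr x z : ip z (- x) = - ip z x.
Proof. by rewrite ipC ipNl rmorphN /= -ipC. Qed.

Lemma ip0r x : ip x 0 = 0.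
Proof. by rewrite ipC ip0l rmorph0. Qed.

Lemma ipxx_ge0 x : 0 <= ip x x.
Proof. by apply: sumr_ge0 => k _; apply: mulcJ_ge0. Qed.

Lemma ipxx_eq0 x : ip x x = 0 -> x = 0.
Proof.
move/eqP; rewrite psumr_eq0 /=; last by move=> k _; apply: mulcJ_ge0.
move=> /allP x_eq0; apply/matrixP => k j; rewrite (ord1 j) mxE.
by have := x_eq0 k (mem_index_enum _); rewrite /= mulf_eq0 conjc_eq0 orbb => /eqP.
Qed.

Definition sqnorm x : R := complex.Re (ip x x).

Lemma ipxx x : ip x x = (sqnorm x)%:C.
Proof. exact/ger0_complex/ipxx_ge0. Qed.

Lemma sqnorm_ge0 x : 0 <= sqnorm x.
Proof. by rewrite -lecR -ipxx ipxx_ge0. Qed.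

Lemma sqnorm_eq0 x : sqnorm x = 0 -> x = 0.
Proof. by move=> x0; apply: ipxx_eq0; rewrite ipxx x0. Qed.

Lemma sqnorm_gt0 x : x != 0 -> 0 < sqnorm x.
Proof.
by move=> x_neq0; rewrite lt_def sqnorm_ge0 andbT (contra_neq (@sqnorm_eq0 x)).
Qed.

Lemma vnormE x : vnorm x = Num.sqrt (sqnorm x).
Proof. by []. Qed.

Lemma sqr_vnorm x : vnorm x ^+ 2 = sqnorm x.
Proof. by rewrite sqr_sqrtr ?sqnorm_ge0. Qed.

Lemma vnorm_ge0 x : 0 <= vnorm x.
Proof. exact: sqrtr_ge0. Qed.

Lemma vnorm_gt0 x : x != 0 -> 0 < vnorm x.
Proof. by move=> x_neq0; rewrite sqrtr_gt0 sqnorm_gt0. Qed.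

Lemma vnorm_normalize x : x != 0 -> vnorm ((vnorm x)^-1%:C *: x) = 1.
Proof.
move=> x_neq0; rewrite vnormE /sqnorm ipZl ipZr conjc_real ipxx -!rmorphM /= mulrA.
by rewrite -expr2 exprVn sqr_vnorm mulVf ?sqrtr1 // gt_eqF ?sqnorm_gt0.
Qed.

Lemma cauchy_schwarz_sq x y : cabs (ip x y) ^+ 2 <= sqnorm x * sqnorm y.
Proof.
have [->|y_neq0] := eqVneq y 0.
  by rewrite ip0r cabsR normr0 expr0n /= /sqnorm ip0r mulr0.
set a := ip y y; set b := ip x y.
have aJ : conjc a = a by rewrite /a ipxx conjc_real.
(* [0 <= |<y,y> x - <x,y> y|^2] is Cauchy-Schwarz multiplied by [<y,y>]. *)
have residual : ip (a *: x - b *: y) (a *: x - b *: y) = a * (a * ip x x - b * conjc b).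
  rewrite !(ipDl, ipNl, ipZl, ipDr, ipNr, ipZr) aJ (ipC x y) -/b -/a; ring.
have := ipxx_ge0 (a *: x - b *: y).
rewrite residual mulcJ_cabs /a !ipxx -rmorphM -rmorphB -rmorphM lecR.
by rewrite pmulr_rge0 ?sqnorm_gt0 // subr_ge0 mulrC.
Qed.

Lemma cauchy_schwarz x y : cabs (ip x y) <= vnorm x * vnorm y.
Proof.
rewrite -(ler_pXn2r (n := 2)) ?nnegrE ?cabs_ge0 ?mulr_ge0 ?vnorm_ge0 //.
by rewrite exprMn !sqr_vnorm cauchy_schwarz_sq.
Qed.

Lemma cauchy_schwarz_eq x y (K : R) : x != 0 -> ip y x = K%:C ->
  vnorm x * vnorm y <= K -> y = (K / sqnorm x)%:C *: x.
Proof.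
move=> x_neq0 yx xy_le; have x_gt0 := sqnorm_gt0 x_neq0.
have xy : ip x y = K%:C by rewrite ipC yx conjc_real.
set c := K / sqnorm x.
have residual : ip (y - c%:C *: x) (y - c%:C *: x) = (sqnorm y - K ^+ 2 / sqnorm x)%:C.
  have x_neq0C : (sqnorm x)%:C != 0 by rewrite eq_complex /= eqxx andbT gt_eqF.
  rewrite !(ipDl, ipNl, ipZl, ipDr, ipNr, ipZr) conjc_real yx xy !ipxx /c.
  by rewrite !(rmorphB, rmorphM, rmorphXn, fmorphV) /=; field.
have K_ge0 : 0 <= K by apply: le_trans xy_le; rewrite mulr_ge0 ?vnorm_ge0.
have : sqnorm (y - c%:C *: x) <= 0.
  rewrite /sqnorm residual /= subr_le0 ler_pdivlMr // -!sqr_vnorm -exprMn mulrC.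
  by rewrite lerXn2r ?nnegrE ?mulr_ge0 ?vnorm_ge0.
move=> residual_le0; apply/eqP; rewrite -subr_eq0; apply/eqP/sqnorm_eq0/eqP.
by rewrite eq_le residual_le0 sqnorm_ge0.
Qed.

Lemma rank1E u v : rank1 u v = v *m adjoint u.
Proof. by apply/matrixP => k l; rewrite !mxE big_ord1 !mxE. Qed.

Lemma rank1_mulmx u v y : rank1 u v *m y = ip y u *: v.
Proof.
by rewrite rank1E -mulmxA (mx11_scalar (adjoint u *m y)) -ipE mul_mx_scalar.
Qed.

Lemma ip_rank1 u v y : ip (rank1 u v *m y) y = ip y u * ip v y.
Proof. by rewrite rank1_mulmx ipZl. Qed.

Definition abs_numrange A :=
  [set cabs (ip (A *m f) f) | f in [set f : 'cV[C]_n | vnorm f = 1]].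

Lemma numradE A : numrad A = sup (abs_numrange A).
Proof. by []. Qed.

Lemma abs_numrange_set0 A : ~ (exists y, vnorm y = 1) -> abs_numrange A = set0.
Proof.
by move=> no_unit; apply/seteqP; split=> // _ [y y1 <-]; apply: no_unit; exists y.
Qed.

Lemma numrad_le A (K : R) : 0 <= K ->
  (forall y, vnorm y = 1 -> cabs (ip (A *m y) y) <= K) -> numrad A <= K.
Proof.
move=> K_ge0 bound; have [[y y1]|no_unit] := pselect (exists y, vnorm y = 1).
  apply: ge_sup; first by exists (cabs (ip (A *m y) y)), y.
  by move=> _ [z z1 <-]; apply: bound.
by rewrite numradE abs_numrange_set0 ?sup0.
Qed.

Lemma abs_numrange_rank1_ub u v : has_ubound (abs_numrange (rank1 u v)).
Proof.
exists (vnorm u * vnorm v) => _ [f /= f1 <-].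
rewrite ip_rank1 cabsM; apply: ler_pM; rewrite ?cabs_ge0 //.
  by apply: le_trans (cauchy_schwarz _ _) _; rewrite f1 mul1r.
by apply: le_trans (cauchy_schwarz _ _) _; rewrite f1 mulr1.
Qed.

Lemma numrad_rank1_ge u v y : vnorm y = 1 ->
  cabs (ip (rank1 u v *m y) y) <= numrad (rank1 u v).
Proof. by move=> y1; apply: (ub_le_sup (abs_numrange_rank1_ub u v)); exists y. Qed.

Lemma numrad_rank1_ge0 u v : 0 <= numrad (rank1 u v).
Proof.
have [[y y1]|no_unit] := pselect (exists y, vnorm y = 1).
  exact: le_trans (cabs_ge0 _) (numrad_rank1_ge u v y1).
by rewrite numradE abs_numrange_set0 ?sup0.
Qed.

Lemma numrad_rank1_sqnorm u v x :
  cabs (ip (rank1 u v *m x) x) <= numrad (rank1 u v) * sqnorm x.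
Proof.
have [->|x_neq0] := eqVneq x 0.
  by rewrite mulmx0 ip0r cabsR normr0 /sqnorm ip0r mulr0.
have := numrad_rank1_ge u v (vnorm_normalize x_neq0).
rewrite -scalemxAr ipZl ipZr conjc_real mulrA -rmorphM cabsM cabsR.
rewrite ger0_norm ?mulr_ge0 ?invr_ge0 ?vnorm_ge0 // -expr2 exprVn sqr_vnorm.
by rewrite -ler_pdivrMr ?sqnorm_gt0 // mulrC.
Qed.

Lemma cabs_ip_le_numrad u v : cabs (ip v u) <= numrad (rank1 u v).
Proof.
have [->|v_neq0] := eqVneq v 0; first by rewrite ip0l cabsR normr0 numrad_rank1_ge0.
have := numrad_rank1_sqnorm u v v.
by rewrite ip_rank1 ipxx cabsM cabsR ger0_norm ?sqnorm_ge0 // ler_pM2r ?sqnorm_gt0.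
Qed.

Lemma numrad_rank1_self u : numrad (rank1 u u) <= sqnorm u.
Proof.
apply: numrad_le => [|y y1]; first exact: sqnorm_ge0.
rewrite ip_rank1 (ipC y u) mulcJ_cabs cabsR ger0_norm ?exprn_ge0 ?cabs_ge0 //.
by rewrite -[sqnorm u]mul1r -(expr1n _ 2) -{1}y1 sqr_vnorm cauchy_schwarz_sq.
Qed.

(* The test vector [|g| f + |f| g] exhibits
   [numrad (rank1 f g) >= (|f| |g| + <g, f>) / 2]. *)
Lemma rank1_vnorm_le f g (K : R) : 0 < K -> ip g f = K%:C ->
  numrad (rank1 f g) <= K -> vnorm f * vnorm g <= K.
Proof.
move=> K_gt0 gf numrad_le_K.
have fg : ip f g = K%:C by rewrite ipC gf conjc_real.
have K_neq0 : K%:C != 0 :> C by rewrite eq_complex /= eqxx andbT gt_eqF.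
have f_neq0 : f != 0 by apply: contra_neq K_neq0 => f0; rewrite -gf f0 ip0r.
have g_neq0 : g != 0 by apply: contra_neq K_neq0 => g0; rewrite -gf g0 ip0l.
set a := vnorm f; set b := vnorm g.
have a_gt0 : 0 < a := vnorm_gt0 f_neq0.
have b_gt0 : 0 < b := vnorm_gt0 g_neq0.
have ff : ip f f = (a ^+ 2)%:C by rewrite ipxx sqr_vnorm.
have gg : ip g g = (b ^+ 2)%:C by rewrite ipxx sqr_vnorm.
set x := b%:C *: f + a%:C *: g.
have ab_gt0 : 0 < a * b := mulr_gt0 a_gt0 b_gt0.
set p := a * b * (a * b + K).
have p_gt0 : 0 < p := mulr_gt0 ab_gt0 (addr_gt0 ab_gt0 K_gt0).
have xx : sqnorm x = 2 * p.
  rewrite /sqnorm /x !(ipDl, ipZl, ipDr, ipZr) !conjc_real ff gg gf fg.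
  by rewrite /= /p; ring.
have Txx : ip (rank1 f g *m x) x = (p * (a * b + K))%:C.
  rewrite ip_rank1 /x !(ipDl, ipZl, ipDr, ipZr) !conjc_real ff gg gf.
  by rewrite !(rmorphM, rmorphD, rmorphXn); ring.
have := le_trans (numrad_rank1_sqnorm f g x) (ler_wpM2r (sqnorm_ge0 x) numrad_le_K).
rewrite Txx xx cabsR ger0_norm; last exact/ltW/mulr_gt0/addr_gt0.
by move=> le_2K; nra.
Qed.

End InnerProduct.

Lemma mulmx_id_eq1 n (M : 'M[C]_n) : (forall f : 'cV[C]_n, M *m f = f) -> M = 1%:M.
Proof.
move=> M_id; apply/matrixP => i j.
have /matrixP/(_ i 0) := M_id (delta_mx j 0).
by rewrite -colE !mxE eqxx andbT.
Qed.

Section Frames.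
Variables n N : nat.
Implicit Types (F G : 'I_N -> 'cV[C]_n) (f : 'cV[C]_n).

Lemma frame_opE F : frame_op F = \sum_(i < N) F i *m adjoint (F i).
Proof. by apply: eq_bigr => i _; rewrite rank1E. Qed.

Lemma sum_ipZ F G f :
  \sum_(i < N) ip f (G i) *: F i = (\sum_(i < N) F i *m adjoint (G i)) *m f.
Proof. by rewrite mulmx_suml; apply: eq_bigr => i _; rewrite -rank1E rank1_mulmx. Qed.

Lemma is_dualE F G : is_dual F G <-> \sum_(i < N) F i *m adjoint (G i) = 1%:M.
Proof.
split=> [dual_FG | sum_eq1 f]; last by rewrite sum_ipZ sum_eq1 mul1mx.
by apply: mulmx_id_eq1 => f; rewrite -sum_ipZ -dual_FG.
Qed.

Lemma sum_absip_frame_op F f :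
  \sum_(i < N) absip f (F i) ^+ 2 = complex.Re (ip (frame_op F *m f) f).
Proof.
rewrite frame_opE -sum_ipZ ip_suml Re_sum; apply: eq_bigr => i _.
by rewrite /absip ipZl (ipC f) mulcJ_cabs.
Qed.

Lemma frame_op_mulmx (A : 'M[C]_n) F :
  frame_op (fun i => A *m F i) = A *m frame_op F *m adjoint A.
Proof.
rewrite !frame_opE mulmx_sumr mulmx_suml; apply: eq_bigr => i _.
by rewrite adjointM !mulmxA.
Qed.

Lemma frame_op1_parseval F : frame_op F = 1%:M -> is_parseval F.
Proof. by move=> S1 f; rewrite sum_absip_frame_op S1 mul1mx sqr_vnorm. Qed.

Lemma parseval_frame F : is_parseval F -> is_frame F.
Proof. by move=> parseval_F; exists 1, 1; do !split=> //; rewrite parseval_F mul1r. Qed.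

Lemma dual_trace F G : is_dual F G -> \sum_(i < N) ip (G i) (F i) = n%:R.
Proof.
move=> /is_dualE sum_eq1.
have : \sum_(i < N) ip (F i) (G i) = n%:R.
  rewrite -mxtrace1 -sum_eq1 raddf_sum; apply: eq_bigr => i _.
  by rewrite /= mxtrace_mulC /mxtrace big_ord1 -ipE.
move=> /(congr1 conjc); rewrite rmorph_sum conjc_nat => <-.
by apply: eq_bigr => i _; rewrite /= -ipC.
Qed.

(* [invmx] is total (it returns singular matrices unchanged), so invertibility
   of the frame operator has to be read off the duality. *)
Lemma canon_dual_unitmx F : is_dual F (canon_dual F) -> frame_op F \in unitmx.
Proof.
move=> /is_dualE sum_eq1.
suff : frame_op F *m adjoint (invmx (frame_op F)) = 1%:M by case/mulmx1_unit.
rewrite {1}frame_opE mulmx_suml -sum_eq1; apply: eq_bigr => i _.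
by rewrite /canon_dual adjointM mulmxA.
Qed.

Lemma eta1FG_ge0 F G : 0 <= eta1FG F G.
Proof.
by rewrite /eta1FG; elim/big_rec: _ => // i x _ x_ge0; rewrite le_max x_ge0 orbT.
Qed.

Lemma numrad_le_eta1FG F G i : numrad (E1 F G i) <= eta1FG F G.
Proof. by rewrite /eta1FG (bigD1 i) //= le_max lexx. Qed.

Lemma eta1FG_le F G (K : R) : 0 <= K ->
  (forall i, numrad (E1 F G i) <= K) -> eta1FG F G <= K.
Proof.
move=> K_ge0 numrad_le_K; rewrite /eta1FG.
by elim/big_ind: _ => //= x y; rewrite ge_max => ->.
Qed.

(* [|<g_i, f_i>| <= eta1FG F G], while the [<g_i, f_i>] add up to [n]. *)
Lemma eta1FG_le_ip_diag F G : (0 < N)%N -> is_dual F G ->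
  eta1FG F G <= n%:R / N%:R -> forall i, ip (G i) (F i) = (n%:R / N%:R)%:C.
Proof.
move=> N_gt0 dual_FG eta_le; set K := n%:R / N%:R.
have cabs_le i : cabs (ip (G i) (F i)) <= K.
  exact: le_trans (cabs_ip_le_numrad _ _) (le_trans (numrad_le_eta1FG _ _ i) eta_le).
have Re_eq i : complex.Re (ip (G i) (F i)) = K.
  have gap_sum : \sum_(j < N) (K - complex.Re (ip (G j) (F j))) = 0.
    rewrite sumrB -Re_sum dual_trace // -(rmorph_nat (real_complex R)) /=.
    by rewrite sumr_const card_ord -[K *+ N]mulr_natr /K divfK ?subrr // pnatr_eq0 -lt0n.
  apply/eqP; rewrite eq_sym -subr_eq0; apply/eqP; apply: (psumr_eq0P _ gap_sum) => // j _.
  by rewrite subr_ge0 (le_trans (Re_le_cabs _)).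
by move=> i; rewrite (cabs_le_Re (z := ip (G i) (F i))) Re_eq ?cabs_le.
Qed.

Lemma eta1FG_le_dual_scale F G : (0 < n)%N -> (0 < N)%N -> is_dual F G ->
  eta1FG F G <= n%:R / N%:R -> forall i, G i = ((n%:R / N%:R) / sqnorm (F i))%:C *: F i.
Proof.
move=> n_gt0 N_gt0 dual_FG eta_le i; set K := n%:R / N%:R.
have K_gt0 : 0 < K by rewrite divr_gt0 ?ltr0n.
have GF := eta1FG_le_ip_diag N_gt0 dual_FG eta_le i.
have F_neq0 : F i != 0.
  by apply/eqP => F0; move: K_gt0; rewrite -[K]/(complex.Re K%:C) -GF F0 ip0r ltxx.
apply: cauchy_schwarz_eq => //; apply: rank1_vnorm_le => //.
exact: le_trans (numrad_le_eta1FG _ _ i) eta_le.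
Qed.

End Frames.

Section HarmonicFrame.
Variables (n N : nat) (z : C).
Hypotheses (nN : (n <= N)%N) (z_prim : N.-primitive_root z).

Let s : R := (Num.sqrt N%:R)^-1.

Definition harmonic_frame (j : 'I_N) : 'cV[C]_n := \col_(k < n) (s%:C * z ^+ (j * k)).

Let N_gt0 : (0 < N)%N := prim_order_gt0 z_prim.

Let zJ m : z ^+ m * conjc (z ^+ m) = 1.
Proof.
by rewrite conjcX -exprMn (unity_root_mulcJ N_gt0 (prim_expr_order z_prim)) expr1n.
Qed.

Let sqr_scale : s ^+ 2 * N%:R = 1.
Proof. by rewrite /s exprVn sqr_sqrtr ?ler0n // mulVf // pnatr_eq0 -lt0n. Qed.

Lemma harmonic_frame_op : frame_op harmonic_frame = 1%:M.
Proof.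
rewrite frame_opE; apply/matrixP => k l; rewrite summxE !mxE.
set w := z ^+ k * conjc (z ^+ l).
have entry (j : 'I_N) :
    (harmonic_frame j *m adjoint (harmonic_frame j)) k l = (s ^+ 2)%:C * w ^+ j.
  rewrite !mxE big_ord1 !mxE conjcM conjc_real /w exprMn !(mulnC j) !exprM !conjcX.
  by rewrite rmorphXn; ring.
rewrite (eq_bigr _ (fun j _ => entry j)) -mulr_sumr.
have [kl|k_neq_l] := eqVneq k l.
  rewrite /w kl zJ; under eq_bigr do rewrite expr1n.
  by rewrite sumr_const card_ord -(rmorph_nat (real_complex R)) -rmorphM sqr_scale rmorph1.
(* the geometric sum of the N-th root of unity [w != 1] vanishes *)
have wN : w ^+ N = 1.
  rewrite /w exprMn -conjcX -!exprM !(mulnC _ N) !exprM (prim_expr_order z_prim).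
  by rewrite !expr1n conjc1 mulr1.
have w_neq1 : w != 1.
  apply: contra_neq k_neq_l => w1; apply/val_inj/eqP.
  have : w * z ^+ l = z ^+ l by rewrite w1 mul1r.
  rewrite /w -mulrA (mulrC (conjc _)) zJ mulr1 => /eqP.
  by rewrite (eq_prim_root_expr z_prim) !modn_small // (leq_trans _ nN).
have : (w - 1) * \sum_(j < N) w ^+ j = 0 by rewrite -subrX1 wN subrr.
by move/eqP; rewrite mulf_eq0 subr_eq0 (negbTE w_neq1) => /eqP ->; rewrite mulr0.
Qed.

Lemma harmonic_sqnorm j : sqnorm (harmonic_frame j) = n%:R / N%:R.
Proof.
have entry (k : 'I_n) : harmonic_frame j k 0 * conjc (harmonic_frame j k 0) = (s ^+ 2)%:C.
  by rewrite !mxE conjcM conjc_real mulrACA zJ mulr1 -rmorphM expr2.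
rewrite /sqnorm /ip (eq_bigr _ (fun k _ => entry k)) sumr_const card_ord -rmorphMn /=.
have N_neq0 : N%:R != 0 :> R by rewrite pnatr_eq0 -lt0n.
by rewrite -mulr_natr; apply: (mulIf N_neq0); rewrite divfK // mulrAC sqr_scale mul1r.
Qed.

End HarmonicFrame.

Lemma eta1_le_ratio n N : (0 < N)%N -> (n <= N)%N -> eta1 R n N <= n%:R / N%:R.
Proof.
move=> N_gt0 nN.
have N_neq0 : N%:R != 0 :> C by rewrite pnatr_eq0 -lt0n.
have [z z_prim] := closed_prim_root_exists N_neq0.
pose H : 'I_N -> 'cV[C]_n := harmonic_frame n z.
have dual_H : dual_pair H H.
  split; first exact/parseval_frame/frame_op1_parseval/harmonic_frame_op.
  by apply/is_dualE; rewrite -frame_opE harmonic_frame_op.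
apply: le_trans (_ : eta1FG H H <= _).
  apply: ge_inf; first by exists 0 => _ [FG _ <-]; apply: eta1FG_ge0.
  by exists (H, H).
apply: eta1FG_le => [|j]; first by rewrite divr_ge0 ?ler0n.
by rewrite -(harmonic_sqnorm n z_prim j); apply: numrad_rank1_self.
Qed.

Lemma numrange_eq0 n (Q : 'M[C]_n) : (forall f, ip (Q *m f) f = 0) -> Q = 0.
Proof.
move=> Q0.
have cross a b : ip (Q *m a) b + ip (Q *m b) a = 0.
  by have := Q0 (a + b); rewrite mulmxDr !(ipDl, ipDr) !Q0 add0r addr0 addrC.
suff Qa0 (a : 'cV[C]_n) : Q *m a = 0.
  apply: (addIr 1%:M); rewrite add0r; apply: mulmx_id_eq1 => f.
  by rewrite mulmxDl Qa0 add0r mul1mx.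
apply: ipxx_eq0; set b := Q *m a.
have iJ : conjc 'i%C = - 'i%C :> C by apply/eqP; rewrite eq_complex /= oppr0 !eqxx.
(* testing [cross] on [b] and on ['i b] separates [<Qa, b>] from [<Qb, a>] *)
have := cross a ('i%C *: b); rewrite ipZr -scalemxAr ipZl iJ.
have := cross a b; set X := ip b b; set Y := ip (Q *m b) a => XY0 iXY0.
have ii : 'i%C * 'i%C = -1 :> C by rewrite -expr2 sqr_i.
have : X *+ 2 = (X + Y) + 'i%C * (- 'i%C * X + 'i%C * Y) + ('i%C * 'i%C + 1) * (X - Y).
  by ring.
by rewrite XY0 iXY0 ii addNr mulr0 mul0r !addr0 => /eqP; rewrite mulrn_eq0 => /eqP.
Qed.

Lemma pos_op_adjoint n (P : 'M[C]_n) : pos_op P -> adjoint P = P.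
Proof.
move=> P_pos; apply/eqP; rewrite -subr_eq0; apply/eqP/numrange_eq0 => f.
rewrite mulmxBl ipDl ipNl ip_adjointl adjointK ipC.
by rewrite [ip (P *m f) f]ger0_complex // conjc_real subrr.
Qed.

Lemma cV0_eq n (x y : 'cV[C]_n) : n = 0%N -> x = y.
Proof. by move=> n0; move: x y; rewrite n0 => x y; rewrite !flatmx0. Qed.

End ComplexHilbert.

Theorem theorem5p3 (R : realType) (n N : nat) (F : 'I_N -> 'cV[R[i]]_n) :
  (n <= N)%N -> is_frame F ->
  inN1 F (canon_dual F) ->
  (forall P : 'M[R[i]]_n,
      pos_op P -> P *m P = invmx (frame_op F) ->
      equal_norm (fun i => P *m F i) /\ is_frame (fun i => P *m F i) /\
      is_parseval (fun i => P *m F i))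
  /\
  (forall G : 'I_N -> 'cV[R[i]]_n, is_dual F G -> inN1 F G -> G = canon_dual F).
Proof.
move=> nN _ [[_ dual_canon] eta_canon].
have eta_le G : eta1FG F G = eta1 R n N -> (0 < n)%N -> eta1FG F G <= n%:R / N%:R.
  by move=> -> n_gt0; apply: eta1_le_ratio (leq_trans n_gt0 nN) nN.
split=> [P P_pos PP | G dual_G [_ eta_G]]; last first.
  apply: funext => i; have [n0|n_gt0] := posnP n; first exact: cV0_eq.
  have N_gt0 := leq_trans n_gt0 nN.
  rewrite (eta1FG_le_dual_scale n_gt0 N_gt0 dual_G) ?eta_le //.
  by rewrite (eta1FG_le_dual_scale n_gt0 N_gt0 dual_canon) ?eta_le.
have P_adj := pos_op_adjoint P_pos.
have PSP : P *m frame_op F *m P = 1%:M.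
  by apply: mulmx1C; rewrite mulmxA PP mulVmx // canon_dual_unitmx.
have parseval_PF : is_parseval (fun i => P *m F i).
  by apply: frame_op1_parseval; rewrite frame_op_mulmx P_adj.
split; last by split; first exact: parseval_frame.
move=> i j; have [n0|n_gt0] := posnP n; first by rewrite (cV0_eq (P *m F i) (P *m F j) n0).
suff sqnorm_PF k : sqnorm (P *m F k) = n%:R / N%:R by rewrite !vnormE !sqnorm_PF.
have GF := eta1FG_le_ip_diag (leq_trans n_gt0 nN) dual_canon (eta_le _ eta_canon n_gt0) k.
by rewrite /sqnorm ip_adjointl P_adj mulmxA PP -/(canon_dual F k) ipC GF conjc_real.
Qed.
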